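(* Let $E^2$ denote the Stokes operator in cardioid coordinates $(\mu,\nu,\varphi)$, acting on functions $\psi(\mu,\nu)$ with $\mu,\nu>0$, by $$E^2\psi=(\mu^2+\nu^2)^3\left[\frac{\partial^2\psi}{\partial \mu^2}+\frac{3\mu^2-\nu^2}{\mu(\mu^2+\nu^2)}\frac{\partial\psi}{\partial \mu}+\frac{3\nu^2-\mu^2}{\nu(\mu^2+\nu^2)}\frac{\partial\psi}{\partial \nu}+\frac{\partial^2\psi}{\partial \nu^2}\right].$$ Then the equation $E^2\psi=0$ $R$-separates variables with $R(\mu,\nu)=\sqrt{2}(\mu^2+\nu^2)$: for twice differentiable, nowhere vanishing $M$ and $N$, the function $\psi(\mu,\nu)=\frac{1}{\sqrt2(\mu^2+\nu^2)}M(\mu)N(\nu)$ satisfies $E^2\psi=0$ if and only if there is a constant $\lambda$ with $$\frac{M''}{M}-\frac{1}{\mu}\frac{M'}{M}=\lambda=-\frac{N''}{N}+\frac{1}{\nu}\frac{N'}{N}.$$ Moreover, for $\lambda=n^2>0$ the solutions are exactly $$M(\mu)=c_1\mu I_1(n\mu)+c_2\mu K_1(n\mu),\qquad N(\nu)=c_3\nu J_1(n\nu)+c_4\nu Y_1(n\nu),$$ with arbitrary constants $c_1,\dots,c_4$; in particular every function $\psi(\mu,\nu)=\frac{1}{\mu^2+\nu^2}\big[c_1\mu I_1(n\mu)+c_2\mu K_1(n\mu)\big]\big[c_3\nu J_1(n\nu)+c_4\nu Y_1(n\nu)\big]$ with $n>0$ satisfies $E^2\psi=0$.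
   Context: Cardioid coordinates $(\mu,\nu,\varphi)$, $\mu,\nu\ge0$, $\varphi\in[0,2\pi)$, are given by $x=\frac{\mu\nu\cos\varphi}{(\mu^2+\nu^2)^2}$, $y=\frac{\mu\nu\sin\varphi}{(\mu^2+\nu^2)^2}$, $z=\frac{\mu^2-\nu^2}{2(\mu^2+\nu^2)^2}$. For a rotational coordinate system $x=\rho(q_1,q_2)\cos\varphi$, $y=\rho(q_1,q_2)\sin\varphi$, $z=z(q_1,q_2)$, with $h_i=\big((\partial_{q_i}\rho)^2+(\partial_{q_i}z)^2\big)^{-1/2}$ and $\varpi=|\rho|$, the Stokes operator is $E^2=h_1h_2\varpi\big[\partial_{q_1}\big(\tfrac{h_1}{h_2\varpi}\partial_{q_1}\big)+\partial_{q_2}\big(\tfrac{h_2}{h_1\varpi}\partial_{q_2}\big)\big]$; in cardioid coordinates this is the displayed formula. $J_1,Y_1$ are the Bessel functions of order one of the first and second kind, and $I_1,K_1$ the modified Bessel functions of order one of the first and second kind. *)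

From Stdlib Require Import Reals Arith Factorial.
From Coquelicot Require Import Coquelicot.
Open Scope R_scope.

Definition d_mu (psi : R -> R -> R) (mu nu : R) : R :=
  Derive (fun m => psi m nu) mu.
Definition d_nu (psi : R -> R -> R) (mu nu : R) : R :=
  Derive (fun n => psi mu n) nu.
Definition d_mumu (psi : R -> R -> R) (mu nu : R) : R :=
  Derive (fun m => Derive (fun m' => psi m' nu) m) mu.
Definition d_nunu (psi : R -> R -> R) (mu nu : R) : R :=
  Derive (fun n => Derive (fun n' => psi mu n') n) nu.

Definition E2 (psi : R -> R -> R) (mu nu : R) : R :=
  (mu ^ 2 + nu ^ 2) ^ 3 *
  ( d_mumu psi mu nu
  + (3 * mu ^ 2 - nu ^ 2) / (mu * (mu ^ 2 + nu ^ 2)) * d_mu psi mu nu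
  + (3 * nu ^ 2 - mu ^ 2) / (nu * (mu ^ 2 + nu ^ 2)) * d_nu psi mu nu
  + d_nunu psi mu nu ).

Definition sep_psi (M N : R -> R) (mu nu : R) : R :=
  / (sqrt 2 * (mu ^ 2 + nu ^ 2)) * M mu * N nu.

Definition twice_diff_pos (f : R -> R) : Prop :=
  forall x, 0 < x -> ex_derive f x /\ ex_derive (Derive f) x.

(** * Bessel functions of order one (DLMF 10.2.2, 10.8.1, 10.25.2, 10.31.1) *)

Fixpoint harm (k : nat) : R :=
  match k with
  | O => 0
  | S m => harm m + / INR (S m)
  end.

Definition euler_gamma : R := real (Lim_seq (fun n => harm n - ln (INR n))).

(* digamma at positive integers: digamma_succ k = psi(k+1) = -gamma + H_k *)
Definition digamma_succ (k : nat) : R := - euler_gamma + harm k.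

Definition bcoef (k : nat) : R := / (INR (fact k) * INR (fact (S k))).

Definition J1 (x : R) : R :=
  (x / 2) * PSeries (fun k => bcoef k) (- (x ^ 2 / 4)).

Definition I1 (x : R) : R :=
  (x / 2) * PSeries (fun k => bcoef k) (x ^ 2 / 4).

Definition Y1 (x : R) : R :=
  - (2 / (PI * x)) + (2 / PI) * ln (x / 2) * J1 x
  - (/ PI) * (x / 2) *
    PSeries (fun k => (digamma_succ k + digamma_succ (S k)) * bcoef k)
            (- (x ^ 2 / 4)).

Definition K1 (x : R) : R :=
  / x + ln (x / 2) * I1 x
  - (x / 4) *
    PSeries (fun k => (digamma_succ k + digamma_succ (S k)) * bcoef k)
            (x ^ 2 / 4).

From Stdlib Require Import Reals Lra Lia Factorial.
From Coquelicot Require Import Coquelicot.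
Open Scope R_scope.

(* The ansatz psi = c M(mu) N(nu) / (mu^2 + nu^2) gives
     E2 psi = c (mu^2 + nu^2)^2 [(M'' - M'/mu) N + M (N'' - N'/nu)],
   so E2 psi = 0 separates with a constant lambda.  The substitution s = x^2 turns
   y'' - y'/x = 4 a y into s Y'' = a Y.  With g(t) = sum t^k / (k! (k+1)!), which solves
   t g'' + 2 g' = g, one solution is reg_sol s = s g(a s); a second, logarithmic one,
   log_sol, is built from the digamma series dser.  Their Wronskian is constant in s and equals -1, read off at
   s = 0, so by Abel's identity every solution is a combination of the two.  Finally
   x I1(n x), x K1(n x) (a = n^2/4) and x J1(n x), x Y1(n x) (a = -n^2/4) are explicit
   independent combinations of them. *)

Ltac eta_Derive :=
  repeat match goal with |- context [Derive (fun x => ?f x)] =>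
    change (fun x => f x) with f end.

Lemma locally_pos x : 0 < x -> locally x (fun t => 0 < t).
Proof.
  intros Hx. exists (mkposreal x Hx). intros t Ht.
  change (Rabs (t - x) < x) in Ht. apply Rabs_lt_between in Ht. lra.
Qed.

Lemma locally_pos_eq (f g : R -> R) x :
  (forall t, 0 < t -> f t = g t) -> 0 < x -> locally x (fun t => f t = g t).
Proof. intros E Hx. eapply filter_imp; [| apply (locally_pos x Hx)]. exact E. Qed.

Lemma Derive_ext_pos (f g : R -> R) x :
  (forall t, 0 < t -> f t = g t) -> 0 < x -> Derive f x = Derive g x.
Proof. intros E Hx. apply Derive_ext_loc, locally_pos_eq; assumption. Qed.

Lemma Derive2_ext_pos (f g : R -> R) x :
  (forall t, 0 < t -> f t = g t) -> 0 < x ->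
  Derive f x = Derive g x /\ Derive (Derive f) x = Derive (Derive g) x.
Proof.
  intros E Hx. split; [exact (Derive_ext_pos f g x E Hx) |].
  apply Derive_ext_pos; [| exact Hx]. intros t Ht. exact (Derive_ext_pos f g t E Ht).
Qed.

Definition is_derive2_pos (y y1 y2 : R -> R) : Prop :=
  forall x, 0 < x -> is_derive y x (y1 x) /\ is_derive y1 x (y2 x).

Lemma is_derive2_pos_Derive y y1 y2 : is_derive2_pos y y1 y2 ->
  forall x, 0 < x -> Derive y x = y1 x /\ Derive (Derive y) x = y2 x.
Proof.
  intros H x Hx. split; [apply is_derive_unique, (H x Hx) |].
  rewrite (Derive_ext_pos _ y1); [apply is_derive_unique, (H x Hx) | | exact Hx].
  intros t Ht. apply is_derive_unique, (H t Ht).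
Qed.

Lemma is_derive2_pos_twice_diff y y1 y2 :
  is_derive2_pos y y1 y2 -> twice_diff_pos y.
Proof.
  intros H x Hx. destruct (is_derive2_pos_Derive y y1 y2 H x Hx) as [_ E2].
  split; [exists (y1 x); apply (H x Hx) |].
  exists (y2 x). eapply is_derive_ext_loc; [| apply (H x Hx)].
  apply locally_pos_eq; [| exact Hx].
  intros t Ht. symmetry. apply (is_derive2_pos_Derive y y1 y2 H t Ht).
Qed.

Lemma twice_diff_is_derive2_pos y :
  twice_diff_pos y -> is_derive2_pos y (Derive y) (Derive (Derive y)).
Proof.
  intros H x Hx. destruct (H x Hx). split; apply Derive_correct; assumption.
Qed.

Lemma is_derive2_pos_ext f y y1 y2 :
  (forall x, 0 < x -> f x = y x) -> is_derive2_pos y y1 y2 -> is_derive2_pos f y1 y2.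
Proof.
  intros E H x Hx. destruct (H x Hx) as [H1 H2]. split; [| exact H2].
  eapply is_derive_ext_loc; [| exact H1].
  apply locally_pos_eq; [| exact Hx]. intros t Ht. symmetry. auto.
Qed.

Lemma is_derive2_pos_lin y y1 y2 z z1 z2 c1 c2 :
  is_derive2_pos y y1 y2 -> is_derive2_pos z z1 z2 ->
  is_derive2_pos (fun x => c1 * y x + c2 * z x) (fun x => c1 * y1 x + c2 * z1 x)
    (fun x => c1 * y2 x + c2 * z2 x).
Proof.
  intros Hy Hz x Hx. destruct (Hy x Hx), (Hz x Hx).
  split; apply @is_derive_plus; apply is_derive_scal; assumption.
Qed.

Lemma is_derive2_pos_comp_sq (Y Y1 Y2 : R -> R) :
  is_derive2_pos Y Y1 Y2 ->
  is_derive2_pos (fun x => Y (x ^ 2)) (fun x => 2 * x * Y1 (x ^ 2))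
    (fun x => 2 * Y1 (x ^ 2) + 4 * x ^ 2 * Y2 (x ^ 2)).
Proof.
  intros H x Hx. assert (Hs : 0 < x ^ 2) by nra. destruct (H _ Hs) as [H1 H2].
  split; auto_derive;
    [exists (Y1 (x ^ 2)); exact H1 | | exists (Y2 (x ^ 2)); exact H2 |];
    eta_Derive; replace (x * (x * 1)) with (x ^ 2) by ring;
    rewrite ?(is_derive_unique _ _ _ H1), ?(is_derive_unique _ _ _ H2); ring.
Qed.

Lemma derive_zero_const_pos (h : R -> R) :
  (forall x, 0 < x -> is_derive h x 0) -> forall x, 0 < x -> h x = h 1.
Proof.
  intros Hd x Hx.
  assert (Hmin : 0 < Rmin 1 x) by (apply Rmin_glb_lt; lra).
  destruct (MVT_gen h 1 x (fun _ => 0)) as [c [_ Hc]].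
  - intros t Ht. apply Hd. lra.
  - intros t Ht.
    apply continuity_pt_filterlim, (@ex_derive_continuous R_AbsRing R_NormedModule).
    exists 0. apply Hd. lra.
  - lra.
Qed.

Lemma continuous_const_pos_at_0 (f : R -> R) K :
  continuous f 0 -> (forall x, 0 < x -> f x = K) -> f 0 = K.
Proof.
  intros Hc HK.
  apply (filterlim_locally_unique
           (FF := Proper_StrongProper _ (at_right_proper_filter 0)) f).
  - apply (filterlim_filter_le_1 f (filter_le_within _) Hc).
  - apply (filterlim_ext_loc (fun _ => K)); [| apply filterlim_const].
    exists (mkposreal 1 Rlt_0_1). intros x _ Hx. symmetry. apply HK, Hx.
Qed.

Definition sep_ode (c : R) (y y1 y2 : R -> R) : Prop :=
  forall x, 0 < x -> y2 x - / x * y1 x = c * y x.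

Lemma sep_ode_comp_sq a (Y Y1 Y2 : R -> R) :
  (forall s, 0 < s -> s * Y2 s = a * Y s) ->
  sep_ode (4 * a) (fun x => Y (x ^ 2)) (fun x => 2 * x * Y1 (x ^ 2))
    (fun x => 2 * Y1 (x ^ 2) + 4 * x ^ 2 * Y2 (x ^ 2)).
Proof.
  intros HY x Hx. replace (4 * a * Y (x ^ 2)) with (4 * (a * Y (x ^ 2))) by ring.
  rewrite <- (HY (x ^ 2)) by nra. field. lra.
Qed.

Lemma sep_ode_wronskian c y y1 y2 z z1 z2 :
  is_derive2_pos y y1 y2 -> is_derive2_pos z z1 z2 ->
  sep_ode c y y1 y2 -> sep_ode c z z1 z2 ->
  exists C, forall x, 0 < x -> y x * z1 x - y1 x * z x = C * x.
Proof.
  intros Dy Dz Oy Oz.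
  set (h := fun x => (y x * z1 x - y1 x * z x) / x).
  assert (Hd : forall x, 0 < x -> is_derive h x 0).
  { intros x Hx. destruct (Dy x Hx) as [Hy1 Hy2], (Dz x Hx) as [Hz1 Hz2].
    unfold h. auto_derive.
    - repeat split; try (eexists; eassumption); lra.
    - eta_Derive.
      rewrite (is_derive_unique _ _ _ Hy1), (is_derive_unique _ _ _ Hy2),
        (is_derive_unique _ _ _ Hz1), (is_derive_unique _ _ _ Hz2).
      assert (Ey : y2 x = / x * y1 x + c * y x) by (pose proof (Oy x Hx); lra).
      assert (Ez : z2 x = / x * z1 x + c * z x) by (pose proof (Oz x Hx); lra).
      rewrite Ey, Ez. field. lra. }
  exists (h 1). intros x Hx. rewrite <- (derive_zero_const_pos h Hd x Hx).
  unfold h. field. lra.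
Qed.

Section SolutionSpace.

Variables (c w : R) (F F1 F2 G G1 G2 : R -> R).
Hypotheses (DF : is_derive2_pos F F1 F2) (DG : is_derive2_pos G G1 G2).
Hypotheses (OF : sep_ode c F F1 F2) (OG : sep_ode c G G1 G2).
Hypothesis w_neq0 : w <> 0.
Hypothesis wronskian_FG : forall x, 0 < x -> F x * G1 x - F1 x * G x = w * x.

Lemma sep_ode_span (M : R -> R) :
  (twice_diff_pos M /\
   forall x, 0 < x -> Derive (Derive M) x - / x * Derive M x = c * M x) <->
  exists c1 c2, forall x, 0 < x -> M x = c1 * F x + c2 * G x.
Proof.
  split.
  - intros [HM HO]. pose proof (twice_diff_is_derive2_pos M HM) as DM.
    destruct (sep_ode_wronskian c _ _ _ _ _ _ DM DF HO OF) as [al Hal].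
    destruct (sep_ode_wronskian c _ _ _ _ _ _ DM DG HO OG) as [be Hbe].
    exists (be / w), (- al / w). intros x Hx.
    pose proof (Hal x Hx). pose proof (Hbe x Hx). pose proof (wronskian_FG x Hx).
    apply (Rmult_eq_reg_r (w * x)); [| apply Rmult_integral_contrapositive; split; lra].
    transitivity (F x * (be * x) - G x * (al * x)); [| field; exact w_neq0].
    rewrite <- H, <- H0, <- H1. ring.
  - intros [c1 [c2 Hc]].
    assert (DM : is_derive2_pos M (fun x => c1 * F1 x + c2 * G1 x)
                                  (fun x => c1 * F2 x + c2 * G2 x))
      by (apply (is_derive2_pos_ext _ _ _ _ Hc), is_derive2_pos_lin; assumption).
    split; [exact (is_derive2_pos_twice_diff _ _ _ DM) |].
    intros x Hx. destruct (is_derive2_pos_Derive _ _ _ DM x Hx) as [-> ->].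
    rewrite Hc by exact Hx.
    pose proof (OF x Hx). pose proof (OG x Hx).
    transitivity (c1 * (F2 x - / x * F1 x) + c2 * (G2 x - / x * G1 x)); [ring |].
    rewrite H, H0. ring.
Qed.

End SolutionSpace.

Lemma span2_change_basis (f g M : R -> R) k c kk : k <> 0 -> c <> 0 ->
  (exists c1 c2, forall x, 0 < x -> M x = c1 * f x + c2 * g x) <->
  exists c1 c2, forall x, 0 < x -> M x = c1 * (k * f x) + c2 * (c * g x + kk * f x).
Proof.
  intros Hk Hc. split; intros [c1 [c2 H]].
  - exists ((c1 - c2 / c * kk) / k), (c2 / c).
    intros x Hx. rewrite H by exact Hx. field. split; assumption.
  - exists (c1 * k + c2 * kk), (c2 * c). intros x Hx. rewrite H by exact Hx. ring.
Qed.

Definition entire (a : nat -> R) : Prop := CV_radius a = p_infty.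

Lemma entire_le_abs (a b : nat -> R) :
  (forall n, Rabs (a n) <= Rabs (b n)) -> entire b -> entire a.
Proof.
  intros H Hb.
  assert (Hle : Rbar_le (CV_radius b) (CV_radius a)).
  { eapply is_lub_Rbar_subset; [| apply CV_radius_bounded | apply CV_radius_bounded].
    intros r [M HM]. exists M. intros n. eapply Rle_trans; [| apply (HM n)].
    rewrite !Rabs_mult. apply Rmult_le_compat_r; [apply Rabs_pos | apply H]. }
  unfold entire in *. rewrite Hb in Hle. destruct (CV_radius a); simpl in Hle; tauto.
Qed.

Lemma entire_incr_1 a : entire a -> entire (PS_incr_1 a).
Proof. unfold entire. rewrite CV_radius_incr_1. trivial. Qed.

Lemma entire_derive a : entire a -> entire (PS_derive a).
Proof. unfold entire. rewrite CV_radius_derive. trivial. Qed.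

Lemma entire_iter_derive a k : entire a -> entire (Nat.iter k PS_derive a).
Proof. intros H. induction k as [| k IH]; [exact H | exact (entire_derive _ IH)]. Qed.

Lemma entire_inside a x : entire a -> Rbar_lt (Rabs x) (CV_radius a).
Proof. intros H. rewrite H. exact I. Qed.

Lemma entire_is_pseries a x : entire a -> is_pseries a x (PSeries a x).
Proof. intros H. apply PSeries_correct, CV_radius_inside, entire_inside, H. Qed.

Lemma is_derive_PSeries_iter a k x : entire a ->
  is_derive (PSeries (Nat.iter k PS_derive a)) x
            (PSeries (Nat.iter (S k) PS_derive a) x).
Proof. intros H. apply is_derive_PSeries, entire_inside, entire_iter_derive, H. Qed.

Lemma is_pseries_lin (a b : nat -> R) x la lb c :
  is_pseries a x la -> is_pseries b x lb ->
  is_pseries (fun n => a n + c * b n) x (la + c * lb).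
Proof.
  intros Ha Hb.
  exact (is_pseries_plus _ _ _ _ _ Ha (is_pseries_scal c b x lb (Rmult_comm _ _) Hb)).
Qed.

Lemma is_pseries_incr_1_R (a : nat -> R) x l :
  is_pseries a x l -> is_pseries (PS_incr_1 a) x (x * l).
Proof. exact (is_pseries_incr_1 a x l). Qed.

Lemma is_pseries_one_value x l :
  is_pseries (fun n => match n with O => 1 | S _ => 0 end) x l -> l = 1.
Proof.
  intros H. rewrite <- (is_pseries_unique _ _ _ H), PSeries_decr_1 by (exists l; exact H).
  rewrite (PSeries_ext _ (fun _ => 0)), PSeries_const_0 by reflexivity. simpl. ring.
Qed.

Lemma bcoef_0 : bcoef 0 = 1.
Proof. unfold bcoef. simpl. rewrite Rmult_1_r. apply Rinv_1. Qed.

Lemma bcoef_S k : bcoef (S k) = bcoef k / (INR (S k) * INR (S (S k))).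
Proof.
  unfold bcoef. change (fact (S (S k))) with (S (S k) * fact (S k))%nat.
  change (fact (S k)) with (S k * fact k)%nat. rewrite !mult_INR.
  pose proof (INR_fact_neq_0 k). pose proof (pos_INR k).
  rewrite !S_INR. field. repeat split; lra.
Qed.

Lemma bcoef_pos k : 0 < bcoef k.
Proof.
  unfold bcoef. apply Rinv_0_lt_compat, Rmult_lt_0_compat; apply lt_0_INR, lt_O_fact.
Qed.

Lemma entire_bcoef : entire bcoef.
Proof.
  apply CV_radius_infinite_DAlembert; [intros k; pose proof (bcoef_pos k); lra |].
  apply is_lim_seq_ext with (fun k => / (INR (S k) * INR (S (S k)))).
  - intros k. pose proof (bcoef_pos k). pose proof (pos_INR k). rewrite bcoef_S, !S_INR.
    replace (bcoef k / ((INR k + 1) * (INR k + 1 + 1)) / bcoef k)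
      with (/ ((INR k + 1) * (INR k + 1 + 1))) by (field; repeat split; lra).
    rewrite Rabs_right; [reflexivity |]. apply Rle_ge, Rlt_le, Rinv_0_lt_compat. nra.
  - replace (Finite 0) with (Rbar_inv p_infty) by reflexivity.
    apply is_lim_seq_inv; [| discriminate].
    apply (is_lim_seq_mult _ _ p_infty p_infty); [| | reflexivity].
    + apply -> is_lim_seq_incr_1. apply is_lim_seq_INR.
    + apply -> (is_lim_seq_incr_1 (fun n => INR (S n))).
      apply -> is_lim_seq_incr_1. apply is_lim_seq_INR.
Qed.

Definition dcoef (k : nat) : R := (digamma_succ k + digamma_succ (S k)) * bcoef k.

Lemma harm_S k : harm (S k) = harm k + / INR (S k).
Proof. reflexivity. Qed.

Lemma harm_bounds k : 0 <= harm k <= INR k.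
Proof.
  induction k as [| k IH]; [simpl; lra |].
  rewrite harm_S, S_INR. pose proof (pos_INR k).
  assert (0 < / (INR k + 1) <= 1).
  { split; [apply Rinv_0_lt_compat; lra |].
    rewrite <- Rinv_1. apply Rinv_le_contravar; lra. }
  lra.
Qed.

(* Since H_k <= k, dcoef k is dominated by const * (k+1) * bcoef k, the coefficients
   of a derivative of an entire series. *)
Lemma entire_dcoef : entire dcoef.
Proof.
  set (C := 2 * Rabs euler_gamma + 2).
  assert (HC : 0 < C) by (pose proof (Rabs_pos euler_gamma); unfold C; lra).
  apply (entire_le_abs _ (PS_scal C (PS_derive (PS_incr_1 bcoef)))).
  - intros k. change (PS_scal C (PS_derive (PS_incr_1 bcoef)) k)
      with (C * (INR (S k) * bcoef k)).
    unfold dcoef, digamma_succ. pose proof (bcoef_pos k). pose proof (pos_INR k).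
    pose proof (harm_bounds k). pose proof (harm_bounds (S k)). rewrite S_INR in *.
    pose proof (Rle_abs euler_gamma). pose proof (Rle_abs (- euler_gamma)).
    rewrite Rabs_Ropp in *.
    assert (Rabs (- euler_gamma + harm k + (- euler_gamma + harm (S k)))
              <= C * (INR k + 1)).
    { pose proof (Rmult_le_pos _ _ (Rabs_pos euler_gamma) (pos_INR k)).
      apply Rabs_le. unfold C. lra. }
    rewrite Rabs_mult, (Rabs_right (bcoef k)), (Rabs_right (C * _))
      by (apply Rle_ge; repeat apply Rmult_le_pos; lra).
    rewrite <- Rmult_assoc. apply Rmult_le_compat_r; lra.
  - unfold entire. rewrite CV_radius_scal by lra.
    apply entire_derive, entire_incr_1, entire_bcoef.
Qed.

Definition bser (k : nat) : R -> R := PSeries (Nat.iter k PS_derive bcoef).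
Definition dser (k : nat) : R -> R := PSeries (Nat.iter k PS_derive dcoef).

Lemma is_derive_bser k t : is_derive (bser k) t (bser (S k) t).
Proof. apply is_derive_PSeries_iter, entire_bcoef. Qed.

Lemma is_derive_dser k t : is_derive (dser k) t (dser (S k) t).
Proof. apply is_derive_PSeries_iter, entire_dcoef. Qed.

Lemma is_pseries_bser k t : is_pseries (Nat.iter k PS_derive bcoef) t (bser k t).
Proof. apply entire_is_pseries, entire_iter_derive, entire_bcoef. Qed.

Lemma is_pseries_dser k t : is_pseries (Nat.iter k PS_derive dcoef) t (dser k t).
Proof. apply entire_is_pseries, entire_iter_derive, entire_dcoef. Qed.

Lemma bser_ode t : t * bser 2 t + 2 * bser 1 t = bser 0 t.
Proof.
  assert (H := is_pseries_lin _ _ t _ _ 2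
                 (is_pseries_incr_1_R _ t _ (is_pseries_bser 2 t)) (is_pseries_bser 1 t)).
  symmetry. apply (is_pseries_unique bcoef t).
  refine (is_pseries_ext _ _ _ _ _ H).
  intros [| k]; cbn -[INR bcoef]; change zero with 0; unfold PS_derive.
  - rewrite bcoef_S, bcoef_0. simpl. field.
  - rewrite (bcoef_S (S k)), !S_INR. pose proof (pos_INR k). field. lra.
Qed.

Lemma bser_dser_identity t :
  bser 0 t + 2 * t * bser 1 t - t * (t * dser 2 t + 2 * dser 1 t - dser 0 t) = 1.
Proof.
  pose (incr := is_pseries_incr_1_R).
  assert (H := is_pseries_lin _ _ t _ _ 1
    (is_pseries_lin _ _ t _ _ (-2)
      (is_pseries_lin _ _ t _ _ (-1)
        (is_pseries_lin _ _ t _ _ 2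
          (is_pseries_bser 0 t) (incr _ t _ (is_pseries_bser 1 t)))
        (incr _ t _ (incr _ t _ (is_pseries_dser 2 t))))
      (incr _ t _ (is_pseries_dser 1 t)))
    (incr _ t _ (is_pseries_dser 0 t))).
  match type of H with is_pseries _ _ ?v =>
    transitivity v; [ring | apply (is_pseries_one_value t)] end.
  refine (is_pseries_ext _ _ _ _ _ H).
  intros [| [| k]]; cbn -[INR bcoef dcoef]; change zero with 0;
    unfold PS_derive, dcoef, digamma_succ; rewrite ?harm_S.
  - rewrite bcoef_0. field.
  - rewrite bcoef_S, bcoef_0. simpl. field.
  - rewrite !bcoef_S, !S_INR. pose proof (pos_INR k). field. repeat split; lra.
Qed.

Lemma is_derive2_x_comp_scal (f : nat -> R -> R) a :
  (forall k t, is_derive (f k) t (f (S k) t)) ->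
  is_derive2_pos (fun s => s * f 0%nat (a * s))
    (fun s => f 0%nat (a * s) + a * s * f 1%nat (a * s))
    (fun s => 2 * a * f 1%nat (a * s) + a ^ 2 * s * f 2%nat (a * s)).
Proof.
  intros Hf s _.
  split; auto_derive; try (repeat split; eexists; apply Hf); eta_Derive;
    rewrite ?(is_derive_unique _ _ _ (Hf _ _)); ring.
Qed.

Section Frobenius.

Variable a : R.

Definition reg_sol s := s * bser 0 (a * s).
Definition reg_sol1 s := bser 0 (a * s) + a * s * bser 1 (a * s).
Definition reg_sol2 s := 2 * a * bser 1 (a * s) + a ^ 2 * s * bser 2 (a * s).
Definition dser_term s := s * dser 0 (a * s).
Definition dser_term1 s := dser 0 (a * s) + a * s * dser 1 (a * s).
Definition dser_term2 s := 2 * a * dser 1 (a * s) + a ^ 2 * s * dser 2 (a * s).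

(* The logarithmic second solution of s Y'' = a Y; it tends to 1 as s -> 0+. *)
Definition log_sol s := 1 + a * (ln s * reg_sol s - dser_term s).
Definition log_sol1 s := a * (bser 0 (a * s) + ln s * reg_sol1 s - dser_term1 s).
Definition log_sol2 s :=
  a * (a * bser 1 (a * s) + reg_sol1 s / s + ln s * reg_sol2 s - dser_term2 s).

Lemma is_derive2_reg_sol : is_derive2_pos reg_sol reg_sol1 reg_sol2.
Proof. exact (is_derive2_x_comp_scal bser a is_derive_bser). Qed.

Lemma is_derive2_dser_term : is_derive2_pos dser_term dser_term1 dser_term2.
Proof. exact (is_derive2_x_comp_scal dser a is_derive_dser). Qed.

Lemma is_derive2_log_sol : is_derive2_pos log_sol log_sol1 log_sol2.
Proof.
  intros s Hs.
  destruct (is_derive2_reg_sol s Hs) as [HP1 HP2], (is_derive2_dser_term s Hs) as [HQ1 HQ2].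
  unfold log_sol, log_sol1, log_sol2.
  split; auto_derive;
    try (repeat split; try lra; eexists; first [eassumption | apply is_derive_bser]);
    eta_Derive;
    rewrite ?(is_derive_unique _ _ _ HP1), ?(is_derive_unique _ _ _ HQ1),
      ?(is_derive_unique _ _ _ HP2), ?(is_derive_unique _ _ _ HQ2),
      ?(is_derive_unique _ _ _ (is_derive_bser _ _)).
  - unfold reg_sol. field. lra.
  - field. lra.
Qed.

Lemma reg_sol_ode s : s * reg_sol2 s = a * reg_sol s.
Proof. unfold reg_sol, reg_sol2. rewrite <- (bser_ode (a * s)). ring. Qed.

Lemma log_sol_ode s : 0 < s -> s * log_sol2 s = a * log_sol s.
Proof.
  intros Hs. set (t := a * s).
  assert (E : s * log_sol2 s - a * log_sol s =
    a * (bser 0 t + 2 * t * bser 1 t - t * (t * dser 2 t + 2 * dser 1 t - dser 0 t) - 1)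
    + a * ln s * t * (t * bser 2 t + 2 * bser 1 t - bser 0 t)).
  { unfold log_sol, log_sol2, reg_sol, reg_sol1, reg_sol2, dser_term, dser_term2, t.
    field. lra. }
  rewrite bser_dser_identity, bser_ode in E. lra.
Qed.

(* The Wronskian of reg_sol and log_sol with the logarithms cancelled, so that it is
   continuous at s = 0. *)
Definition wronskian0 s :=
  a * reg_sol s * bser 0 (a * s)
  - a * (reg_sol s * dser_term1 s - reg_sol1 s * dser_term s) - reg_sol1 s.

Lemma wronskian_reg_log s : reg_sol s * log_sol1 s - reg_sol1 s * log_sol s = wronskian0 s.
Proof. unfold log_sol, log_sol1, wronskian0, reg_sol. ring. Qed.

Lemma wronskian0_at_0 : wronskian0 0 = -1.
Proof.
  unfold wronskian0, reg_sol, reg_sol1, dser_term, bser.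
  rewrite !Rmult_0_r, !Rmult_0_l, PSeries_0.
  simpl. rewrite bcoef_0. ring.
Qed.

Lemma continuous_wronskian0_sq : continuous (fun x => wronskian0 (x ^ 2)) 0.
Proof.
  apply (@ex_derive_continuous R_AbsRing R_NormedModule).
  unfold wronskian0, reg_sol, reg_sol1, dser_term, dser_term1. auto_derive.
  repeat split; match goal with
  | |- ex_derive (fun _ => bser ?k _) ?s => exists (bser (S k) s); apply is_derive_bser
  | |- ex_derive (fun _ => dser ?k _) ?s => exists (dser (S k) s); apply is_derive_dser
  end.
Qed.

Lemma wronskian_reg_log_sq x : 0 < x ->
  reg_sol (x ^ 2) * (2 * x * log_sol1 (x ^ 2)) - 2 * x * reg_sol1 (x ^ 2) * log_sol (x ^ 2)
  = -2 * x.
Proof.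
  destruct (sep_ode_wronskian (4 * a) _ _ _ _ _ _
    (is_derive2_pos_comp_sq _ _ _ is_derive2_reg_sol)
    (is_derive2_pos_comp_sq _ _ _ is_derive2_log_sol)
    (sep_ode_comp_sq a _ _ _ (fun s _ => reg_sol_ode s)) (sep_ode_comp_sq a _ _ _ log_sol_ode))
    as [C HC].
  assert (HW : forall y, 0 < y -> wronskian0 (y ^ 2) = C / 2).
  { intros y Hy. pose proof (HC y Hy) as H. rewrite <- wronskian_reg_log.
    apply (Rmult_eq_reg_l (2 * y)); [| lra].
    replace (2 * y * (C / 2)) with (C * y) by field. rewrite <- H. ring. }
  pose proof (continuous_const_pos_at_0 _ _ continuous_wronskian0_sq HW) as H0.
  cbv beta in H0. rewrite pow_i, wronskian0_at_0 in H0 by lia.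
  intros Hx. rewrite HC by exact Hx. replace C with (-2) by lra. reflexivity.
Qed.

Lemma frobenius_span (M : R -> R) :
  (twice_diff_pos M /\
   forall x, 0 < x -> Derive (Derive M) x - / x * Derive M x = 4 * a * M x) <->
  exists c1 c2, forall x, 0 < x -> M x = c1 * reg_sol (x ^ 2) + c2 * log_sol (x ^ 2).
Proof.
  refine (sep_ode_span (4 * a) (-2) _ _ _ _ _ _
    (is_derive2_pos_comp_sq _ _ _ is_derive2_reg_sol)
    (is_derive2_pos_comp_sq _ _ _ is_derive2_log_sol)
    (sep_ode_comp_sq a _ _ _ (fun s _ => reg_sol_ode s)) (sep_ode_comp_sq a _ _ _ log_sol_ode)
    _ _ M).
  - lra.
  - intros x Hx. rewrite <- (wronskian_reg_log_sq x Hx). ring.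
Qed.

End Frobenius.

Lemma bessel_type_span a k c kk (F G M : R -> R) : k <> 0 -> c <> 0 ->
  (forall x, 0 < x -> F x = k * reg_sol a (x ^ 2)) ->
  (forall x, 0 < x -> G x = c * log_sol a (x ^ 2) + kk * reg_sol a (x ^ 2)) ->
  (twice_diff_pos M /\
   forall x, 0 < x -> Derive (Derive M) x - / x * Derive M x = 4 * a * M x) <->
  exists c1 c2, forall x, 0 < x -> M x = c1 * F x + c2 * G x.
Proof.
  intros Hk Hc HF HG. rewrite frobenius_span, (span2_change_basis _ _ _ k c kk Hk Hc).
  split; intros [c1 [c2 H]]; exists c1, c2; intros x Hx;
    rewrite H, ?HF, ?HG by exact Hx; reflexivity.
Qed.

Lemma is_derive2_quot_sumsq (f : R -> R) b K : twice_diff_pos f ->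
  is_derive2_pos (fun x => K * f x / (x ^ 2 + b ^ 2))
    (fun x => K * (Derive f x / (x ^ 2 + b ^ 2) - 2 * x * f x / (x ^ 2 + b ^ 2) ^ 2))
    (fun x => K * (Derive (Derive f) x / (x ^ 2 + b ^ 2)
                   - 4 * x * Derive f x / (x ^ 2 + b ^ 2) ^ 2
                   - 2 * f x / (x ^ 2 + b ^ 2) ^ 2
                   + 8 * x ^ 2 * f x / (x ^ 2 + b ^ 2) ^ 3)).
Proof.
  intros Hf x Hx. destruct (Hf x Hx).
  assert (0 < x ^ 2 + b ^ 2) by nra.
  split; auto_derive; try (repeat split; assumption || nra); eta_Derive; field; lra.
Qed.

Lemma E2_separated c (psi : R -> R -> R) (M N : R -> R) :
  twice_diff_pos M -> twice_diff_pos N ->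
  (forall x y, 0 < x -> 0 < y -> psi x y = c / (x ^ 2 + y ^ 2) * M x * N y) ->
  forall mu nu, 0 < mu -> 0 < nu ->
  E2 psi mu nu = c * (mu ^ 2 + nu ^ 2) ^ 2 *
    ((Derive (Derive M) mu - / mu * Derive M mu) * N nu +
     M mu * (Derive (Derive N) nu - / nu * Derive N nu)).
Proof.
  intros HM HN Hpsi mu nu Hmu Hnu.
  destruct (Derive2_ext_pos (fun x => psi x nu) (fun x => c * N nu * M x / (x ^ 2 + nu ^ 2))
              mu) as [Dmu Dmumu]; [intros x Hx; rewrite Hpsi by lra; field; nra | exact Hmu |].
  destruct (Derive2_ext_pos (psi mu) (fun y => c * M mu * N y / (y ^ 2 + mu ^ 2))
              nu) as [Dnu Dnunu]; [intros y Hy; rewrite Hpsi by lra; field; nra | exact Hnu |].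
  destruct (is_derive2_pos_Derive _ _ _ (is_derive2_quot_sumsq M nu (c * N nu) HM) mu Hmu)
    as [DM1 DM2].
  destruct (is_derive2_pos_Derive _ _ _ (is_derive2_quot_sumsq N mu (c * M mu) HN) nu Hnu)
    as [DN1 DN2].
  unfold E2, d_mu, d_nu, d_mumu, d_nunu. eta_Derive.
  rewrite Dmu, Dmumu, Dnu, Dnunu, DM1, DM2, DN1, DN2.
  field. repeat split; nra.
Qed.

Lemma separated_sum_zero_iff (A B M N : R -> R) :
  (forall x, 0 < x -> M x <> 0) -> (forall y, 0 < y -> N y <> 0) ->
  (forall x y, 0 < x -> 0 < y -> A x * N y + M x * B y = 0) <->
  exists lam, (forall x, 0 < x -> A x = lam * M x) /\ (forall y, 0 < y -> B y = - lam * N y).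
Proof.
  intros HM HN. split.
  - intros H. pose proof (HM 1 Rlt_0_1). pose proof (HN 1 Rlt_0_1).
    assert (HB1 : B 1 = - (A 1 / M 1) * N 1).
    { pose proof (H 1 1 Rlt_0_1 Rlt_0_1).
      apply (Rmult_eq_reg_l (M 1)); [| assumption].
      transitivity (- (A 1 * N 1)); [lra | field; assumption]. }
    exists (A 1 / M 1). split.
    + intros x Hx. pose proof (H x 1 Hx Rlt_0_1).
      apply (Rmult_eq_reg_r (N 1)); [| assumption].
      transitivity (- (M x * B 1)); [lra |]. rewrite HB1. field. assumption.
    + intros y Hy. pose proof (H 1 y Rlt_0_1 Hy).
      apply (Rmult_eq_reg_l (M 1)); [| assumption].
      transitivity (- (A 1 * N y)); [lra | field; assumption].
  - intros [lam [HA HB]] x y Hx Hy. rewrite HA, HB by assumption. ring.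
Qed.

Lemma R_separation (M N : R -> R) :
  twice_diff_pos M -> twice_diff_pos N ->
  (forall x, 0 < x -> M x <> 0) -> (forall x, 0 < x -> N x <> 0) ->
  ((forall mu nu, 0 < mu -> 0 < nu -> E2 (sep_psi M N) mu nu = 0) <->
   exists lam : R,
     (forall mu, 0 < mu ->
        Derive (Derive M) mu / M mu - / mu * (Derive M mu / M mu) = lam) /\
     (forall nu, 0 < nu ->
        - (Derive (Derive N) nu / N nu) + / nu * (Derive N nu / N nu) = lam)).
Proof.
  intros HM HN HM0 HN0.
  assert (Hsqrt2 : 0 < sqrt 2) by (apply sqrt_lt_R0; lra).
  set (A x := Derive (Derive M) x - / x * Derive M x).
  set (B y := Derive (Derive N) y - / y * Derive N y).
  assert (HE : forall mu nu, 0 < mu -> 0 < nu ->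
    E2 (sep_psi M N) mu nu = / sqrt 2 * (mu ^ 2 + nu ^ 2) ^ 2 * (A mu * N nu + M mu * B nu)).
  { apply E2_separated; [assumption | assumption |].
    intros x y Hx Hy. unfold sep_psi. field. split; nra. }
  assert (Hfactor : forall mu nu, 0 < mu -> 0 < nu -> / sqrt 2 * (mu ^ 2 + nu ^ 2) ^ 2 <> 0).
  { intros mu nu Hmu Hnu. apply Rmult_integral_contrapositive. split.
    - apply Rinv_neq_0_compat. lra.
    - apply pow_nonzero. nra. }
  transitivity (forall mu nu, 0 < mu -> 0 < nu -> A mu * N nu + M mu * B nu = 0).
  { split; intros H mu nu Hmu Hnu; specialize (H mu nu Hmu Hnu); rewrite HE in * by assumption.
    - apply Rmult_integral in H. destruct H; [contradiction (Hfactor mu nu) | ]; assumption.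
    - rewrite H. ring. }
  rewrite (separated_sum_zero_iff A B M N HM0 HN0).
  split; intros [lam [HlA HlB]]; exists lam; split.
  - intros mu Hmu. pose proof (HM0 mu Hmu).
    transitivity (A mu / M mu); [unfold A; field; split; first [assumption | lra] |].
    rewrite HlA by assumption. field. assumption.
  - intros nu Hnu. pose proof (HN0 nu Hnu).
    transitivity (- (B nu / N nu)); [unfold B; field; split; first [assumption | lra] |].
    rewrite HlB by assumption. field. assumption.
  - intros mu Hmu. pose proof (HM0 mu Hmu). rewrite <- (HlA mu Hmu). unfold A.
    field. split; first [assumption | lra].
  - intros nu Hnu. pose proof (HN0 nu Hnu). rewrite <- (HlB nu Hnu). unfold B.
    field. split; first [assumption | lra].
Qed.

Lemma ln_scaled n x : 0 < n -> 0 < x -> ln (n * x / 2) = ln (n / 2) + ln (x ^ 2) / 2.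
Proof.
  intros Hn Hx. rewrite ln_pow by exact Hx.
  replace (n * x / 2) with (n / 2 * x) by field. rewrite ln_mult by lra. simpl. field.
Qed.

Lemma I1_frobenius n x : x * I1 (n * x) = n / 2 * reg_sol (n ^ 2 / 4) (x ^ 2).
Proof.
  unfold I1, reg_sol, bser. replace ((n * x) ^ 2 / 4) with (n ^ 2 / 4 * x ^ 2) by field.
  simpl Nat.iter. change (fun k : nat => bcoef k) with bcoef. field.
Qed.

Lemma K1_frobenius n x : 0 < n -> 0 < x ->
  x * K1 (n * x)
  = / n * log_sol (n ^ 2 / 4) (x ^ 2) + n / 2 * ln (n / 2) * reg_sol (n ^ 2 / 4) (x ^ 2).
Proof.
  intros Hn Hx. unfold K1, log_sol, dser_term, reg_sol, I1, bser, dser.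
  rewrite ln_scaled by assumption.
  replace ((n * x) ^ 2 / 4) with (n ^ 2 / 4 * x ^ 2) by field.
  simpl Nat.iter. change (fun k : nat => bcoef k) with bcoef. unfold dcoef. field. lra.
Qed.

Lemma J1_frobenius n x : x * J1 (n * x) = n / 2 * reg_sol (- (n ^ 2 / 4)) (x ^ 2).
Proof.
  unfold J1, reg_sol, bser.
  replace (- ((n * x) ^ 2 / 4)) with (- (n ^ 2 / 4) * x ^ 2) by field.
  simpl Nat.iter. change (fun k : nat => bcoef k) with bcoef. field.
Qed.

Lemma Y1_frobenius n x : 0 < n -> 0 < x ->
  x * Y1 (n * x) = - (2 / (PI * n)) * log_sol (- (n ^ 2 / 4)) (x ^ 2)
                   + n / PI * ln (n / 2) * reg_sol (- (n ^ 2 / 4)) (x ^ 2).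
Proof.
  intros Hn Hx. pose proof PI_RGT_0.
  unfold Y1, log_sol, dser_term, reg_sol, J1, bser, dser. rewrite ln_scaled by assumption.
  replace (- ((n * x) ^ 2 / 4)) with (- (n ^ 2 / 4) * x ^ 2) by field.
  simpl Nat.iter. change (fun k : nat => bcoef k) with bcoef. unfold dcoef. field. lra.
Qed.

Lemma modified_bessel_span n (M : R -> R) : 0 < n ->
  (twice_diff_pos M /\
   forall mu, 0 < mu -> Derive (Derive M) mu - / mu * Derive M mu = n ^ 2 * M mu) <->
  exists c1 c2 : R, forall mu, 0 < mu -> M mu = c1 * mu * I1 (n * mu) + c2 * mu * K1 (n * mu).
Proof.
  intros Hn. replace (n ^ 2) with (4 * (n ^ 2 / 4)) by field.
  rewrite (bessel_type_span (n ^ 2 / 4) (n / 2) (/ n) (n / 2 * ln (n / 2))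
             (fun x => x * I1 (n * x)) (fun x => x * K1 (n * x)) M).
  - split; intros [c1 [c2 H]]; exists c1, c2; intros mu Hmu; rewrite H by exact Hmu; ring.
  - lra.
  - apply Rinv_neq_0_compat. lra.
  - intros x _. apply I1_frobenius.
  - intros x Hx. apply K1_frobenius; assumption.
Qed.

Lemma bessel_span n (N : R -> R) : 0 < n ->
  (twice_diff_pos N /\
   forall nu, 0 < nu -> Derive (Derive N) nu - / nu * Derive N nu = - (n ^ 2) * N nu) <->
  exists c3 c4 : R, forall nu, 0 < nu -> N nu = c3 * nu * J1 (n * nu) + c4 * nu * Y1 (n * nu).
Proof.
  intros Hn. pose proof PI_RGT_0 as Hpi. replace (- (n ^ 2)) with (4 * - (n ^ 2 / 4)) by field.
  rewrite (bessel_type_span (- (n ^ 2 / 4)) (n / 2) (- (2 / (PI * n))) (n / PI * ln (n / 2))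
             (fun x => x * J1 (n * x)) (fun x => x * Y1 (n * x)) N).
  - split; intros [c1 [c2 H]]; exists c1, c2; intros nu Hnu; rewrite H by exact Hnu; ring.
  - lra.
  - apply Ropp_neq_0_compat, Rgt_not_eq, Rdiv_lt_0_compat; [lra | nra].
  - intros x _. apply J1_frobenius.
  - intros x Hx. apply Y1_frobenius; assumption.
Qed.

Theorem mainTheorem3 :
  (* (1) R-separation with R = sqrt 2 (mu^2+nu^2) *)
  (forall M N : R -> R,
     twice_diff_pos M -> twice_diff_pos N ->
     (forall x, 0 < x -> M x <> 0) -> (forall x, 0 < x -> N x <> 0) ->
     ((forall mu nu, 0 < mu -> 0 < nu -> E2 (sep_psi M N) mu nu = 0) <->
      exists lam : R,
        (forall mu, 0 < mu ->
           Derive (Derive M) mu / M mu - / mu * (Derive M mu / M mu) = lam) /\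
        (forall nu, 0 < nu ->
           - (Derive (Derive N) nu / N nu) + / nu * (Derive N nu / N nu) = lam)))
  /\
  (* (2) for lambda = n^2 > 0 the solutions are exactly the Bessel combinations *)
  (forall n : R, 0 < n ->
     (forall M : R -> R,
        (twice_diff_pos M /\
         forall mu, 0 < mu ->
           Derive (Derive M) mu - / mu * Derive M mu = n ^ 2 * M mu) <->
        exists c1 c2 : R, forall mu, 0 < mu ->
           M mu = c1 * mu * I1 (n * mu) + c2 * mu * K1 (n * mu))
     /\
     (forall N : R -> R,
        (twice_diff_pos N /\
         forall nu, 0 < nu ->
           Derive (Derive N) nu - / nu * Derive N nu = - (n ^ 2) * N nu) <->
        exists c3 c4 : R, forall nu, 0 < nu ->
           N nu = c3 * nu * J1 (n * nu) + c4 * nu * Y1 (n * nu)))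
  /\
  (* (3) the separated solutions *)
  (forall n c1 c2 c3 c4 : R, 0 < n ->
     forall mu nu, 0 < mu -> 0 < nu ->
       E2 (fun m v => / (m ^ 2 + v ^ 2) *
                      (c1 * m * I1 (n * m) + c2 * m * K1 (n * m)) *
                      (c3 * v * J1 (n * v) + c4 * v * Y1 (n * v))) mu nu = 0).
Proof.
  split; [exact R_separation | split].
  - intros n Hn. split; intros; [apply modified_bessel_span | apply bessel_span]; exact Hn.
  - intros n c1 c2 c3 c4 Hn mu nu Hmu Hnu.
    set (M m := c1 * m * I1 (n * m) + c2 * m * K1 (n * m)).
    set (N v := c3 * v * J1 (n * v) + c4 * v * Y1 (n * v)).
    destruct (proj2 (modified_bessel_span n M Hn)) as [HM HMode];
      [exists c1, c2; reflexivity |].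
    destruct (proj2 (bessel_span n N Hn)) as [HN HNode]; [exists c3, c4; reflexivity |].
    rewrite (E2_separated 1 _ M N HM HN)
      by first [assumption | intros; unfold M, N, Rdiv; ring].
    rewrite HMode, HNode by assumption. ring.
Qed.
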